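(* Fix an integer $k\ge1$. Let $M$ be the set consisting of the empty composition together with all Fibonacci compositions of even numbers that start with $(1,2^{k-1})$. Let $Q$ be the free monoid (under concatenation) whose primes are the compositions $(1,2^l,1,2^{j})$ with $l\ge0$ and $0\le j\le k-2$ (so $Q$ contains only the empty composition when $k=1$). Then $M$ is a free monoid under concatenation whose primes are exactly the compositions of the form $(1,2^{k-1},2^i,q,1,2^j)$ with $i,j\ge0$ integers and $q\in Q$. Moreover, assigning weight $n$ to a composition of $2n$, the generating function of the primes of $M$ is $\dfrac{x^k}{1-3x+x^2+x^k}$, and $$1+\sum_{n\ge 0}F_{2n+2}x^{n+k}=1+\frac{x^k}{1-3x+x^2}=\Bigl(1-\frac{x^k}{1-3x+x^2+x^k}\Bigr)^{-1}.$$
   Context: A Fibonacci composition is a composition (finite sequence of positive integers) with all parts equal to $1$ or $2$; a Fibonacci composition of $n$ is one whose parts sum to $n$. $2^j$ denotes $j$ consecutive parts equal to $2$. A free monoid is one in which every element factors uniquely as a product of primes. The generating function of a set $S$ of compositions of even numbers is $\sum_{c\in S}x^{|c|/2}$, $|c|$ the sum of the parts. Fibonacci numbers: $F_0=0$, $F_1=1$, $F_n=F_{n-1}+F_{n-2}$. *)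

From mathcomp Require Import all_boot all_order all_algebra.
Set Implicit Arguments. Unset Strict Implicit. Unset Printing Implicit Defensive.
Import GRing.Theory Num.Theory.

(* Compositions are represented as seq nat (sequence of parts). *)

Definition fib_comp (s : seq nat) : bool := all (fun a => (a == 1) || (a == 2)) s.

Definition inM (k : nat) (s : seq nat) : Prop :=
  s = [::] \/
  (fib_comp s /\ ~~ odd (sumn s) /\ prefix (1 :: nseq (k - 1) 2) s).

Definition primeQ (k : nat) (p : seq nat) : Prop :=
  exists l j : nat, j.+2 <= k /\ p = 1 :: nseq l 2 ++ 1 :: nseq j 2.

Definition inQ (k : nat) (q : seq nat) : Prop :=
  exists ps : seq (seq nat), (forall p, p \in ps -> primeQ k p) /\ flatten ps = q.

Definition primeM (k : nat) (p : seq nat) : Prop :=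
  exists (i j : nat) (q : seq nat),
    inQ k q /\ p = 1 :: nseq (k - 1) 2 ++ nseq i 2 ++ q ++ 1 :: nseq j 2.

Definition irreducible (S : seq nat -> Prop) (p : seq nat) : Prop :=
  S p /\ p <> [::] /\
  (forall a b, S a -> S b -> p = a ++ b -> a = [::] \/ b = [::]).

Definition free_monoid (S : seq nat -> Prop) : Prop :=
  S [::] /\ (forall a b, S a -> S b -> S (a ++ b)) /\
  (forall s, S s -> exists! ps : seq (seq nat),
      (forall p, p \in ps -> irreducible S p) /\ flatten ps = s).

Definition card_is (P : seq nat -> Prop) (N : nat) : Prop :=
  exists l : seq (seq nat), uniq l /\ (forall c, c \in l <-> P c) /\ size l = N.

Fixpoint fib (n : nat) : nat :=
  match n with
  | 0 => 0
  | m.+1 => match m with 0 => 1 | p.+1 => fib m + fib p end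
  end.

Local Open Scope ring_scope.

(* Formal power series over int, represented by coefficient sequences;
   coefficient n of the Cauchy product. *)
Definition conv (f g : nat -> int) (n : nat) : int :=
  \sum_(i < n.+1) f i * g (n - i)%N.

Definition denom0 (n : nat) : int :=
  (n == 0)%N%:R - 3 * (n == 1)%N%:R + (n == 2)%N%:R.

Definition denomk (k n : nat) : int := denom0 n + (n == k)%:R.

Definition gfB (k n : nat) : int :=
  (n == 0)%:R + (if (k <= n)%N then (fib (2 * (n - k) + 2))%:Z else 0).

(* 1. A submonoid of (seq nat, ++) that is right unitary (uv, v in S imply
      u in S) is free: factorizations exist by induction on length, and
      irreducible first/last factors are unique (section RightUnitarySubmonoid).
      M_k is right unitary, because a nonempty proper prefix of the head has
      odd weight.
   2. By right unitarity a nonempty element of M_k is prime iff no proper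
      nonempty suffix lies in M_k, i.e. no cut at even weight is followed by
      the head (predicate no_cut).  Reading the composition block by block
      shows that these are exactly the compositions of the announced shape.
   3. Let g_n, a_n count the elements and the primes of M_k of weight n.
      Counting Fibonacci compositions with a given beginning gives
      g_n = F_(2(n-k)+2) (n >= 1), whence (G - 1)(1 - 3x + x^2) = x^k; the
      unique decomposition "element of M_k, then a prime" gives G (1 - A) = 1.
      The remaining identity A (1 - 3x + x^2 + x^k) = x^k is then pure
      algebra on power series, done with polynomials truncated at x^N. *)

From mathcomp Require Import all_boot all_order all_algebra.
From mathcomp Require Import zify ring.
From Stdlib Require Import Classical_Prop.
Import GRing.Theory Num.Theory.
Set Implicit Arguments. Unset Strict Implicit. Unset Printing Implicit Defensive.

Lemma cat_overlap (T : Type) (a b c d : seq T) : size a <= size c ->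
  a ++ b = c ++ d -> exists w, c = a ++ w /\ b = w ++ d.
Proof.
elim: a c => [|x a IH] c; first by move=> _ /= ->; exists c.
case: c => [//|y c] /=.
by rewrite ltnS => hs [-> e]; have [w [-> ->]] := IH _ hs e; exists w.
Qed.

Section RightUnitarySubmonoid.
Variable S : seq nat -> Prop.
Hypothesis S_nil : S [::].
Hypothesis S_cat : forall a b, S a -> S b -> S (a ++ b).
Hypothesis S_unitary : forall u v, S (u ++ v) -> S v -> S u.

Lemma irreducible_in p : irreducible S p -> S p.
Proof. by case. Qed.

Lemma irreducible_neq0 p : irreducible S p -> p <> [::].
Proof. by case=> _ []. Qed.

(* Elements of S which have no proper nonempty suffix in S are irreducible;
   right unitarity makes the missing prefix condition automatic. *)
Lemma irreducibleP p : irreducible S p <->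
  [/\ S p, p <> [::] & forall u v, p = u ++ v -> u <> [::] -> v <> [::] -> ~ S v].
Proof.
split=> [[Sp [p0 Hp]]|[Sp p0 Hp]].
  split=> // u v e u0 v0 Sv; have Su : S u by apply: S_unitary Sv; rewrite -e.
  by case: (Hp u v Su Sv e).
split=> //; split=> // u v _ Sv e.
case: (classic (u = [::])) => [|u0]; [by left | right].
by apply: NNPP => v0; exact: (Hp u v e u0 v0 Sv).
Qed.

Lemma irreducible_prefix_unique p1 t1 p2 t2 :
  irreducible S p1 -> irreducible S p2 -> S t1 -> S t2 ->
  p1 ++ t1 = p2 ++ t2 -> p1 = p2.
Proof.
wlog hs : p1 t1 p2 t2 / size p1 <= size p2.
  move=> W i1 i2 m1 m2 e; case: (leqP (size p1) (size p2)) => hs.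
    exact: (W p1 t1 p2 t2 hs i1 i2 m1 m2 e).
  exact/esym/(W p2 t2 p1 t1 (ltnW hs) i2 i1 m2 m1 (esym e)).
move=> i1 [_ [_ H2]] m1 m2 e; have [w [e2 e1]] := cat_overlap hs e.
have Sw : S w by apply: S_unitary m2; rewrite -e1.
case: (H2 p1 w (irreducible_in i1) Sw e2) => [/(irreducible_neq0 i1)//|w0].
by rewrite e2 w0 cats0.
Qed.

Lemma irreducible_suffix_unique p1 t1 p2 t2 :
  irreducible S p1 -> irreducible S p2 -> t1 ++ p1 = t2 ++ p2 -> p1 = p2 /\ t1 = t2.
Proof.
have suffix_eq q1 s1 q2 s2 : size s1 <= size s2 -> irreducible S q1 -> irreducible S q2 ->
    s1 ++ q1 = s2 ++ q2 -> q1 = q2.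
  move=> hs [Sq1 [_ H1]] i2 e; have [w [e2 e1]] := cat_overlap hs e.
  have Sw : S w by apply: (S_unitary (v := q2)); rewrite -?e1 //; apply: irreducible_in.
  case: (H1 w q2 Sw (irreducible_in i2) e1) => [w0|/(irreducible_neq0 i2)//].
  by rewrite e1 w0.
move=> i1 i2 e.
have ep : p1 = p2.
  case: (leqP (size t1) (size t2)) => hs; first exact: suffix_eq hs i1 i2 e.
  by apply/esym; apply: suffix_eq (ltnW hs) i2 i1 (esym e).
split=> //; subst p2.
have hs : size t1 = size t2 by move/(congr1 size): e; rewrite !size_cat; lia.
by move/eqP: e; rewrite eqseq_cat // => /andP[/eqP].
Qed.

Lemma flatten_irreducible ps : (forall p, p \in ps -> irreducible S p) ->
  S (flatten ps).
Proof.
elim: ps => [//|p ps IH] H /=; apply: S_cat; first by apply/irreducible_in/H/mem_head.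
by apply: IH => q hq; apply: H; rewrite inE hq orbT.
Qed.

Lemma factorization_exists s : S s -> exists ps,
  (forall p, p \in ps -> irreducible S p) /\ flatten ps = s.
Proof.
have [n] := ubnP (size s); elim: n s => // n IH s hs Ss.
case: (classic (s = [::])) => [->|s0]; first by exists [::].
case: (classic (exists a b, [/\ S a, S b, s = a ++ b, a <> [::] & b <> [::]])).
  case=> a [b [Sa Sb e a0 b0]].
  have [sa sb] : size a < n /\ size b < n.
    have /eqP a0' : size a != 0 by rewrite size_eq0; apply/eqP.
    have /eqP b0' : size b != 0 by rewrite size_eq0; apply/eqP.
    by move: hs; rewrite e size_cat; lia.
  have [pa [ha ea]] := IH a sa Sa; have [pb [hb eb]] := IH b sb Sb.
  exists (pa ++ pb); rewrite flatten_cat ea eb e; split=> // p.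
  by rewrite mem_cat => /orP[/ha|/hb].
move=> nosplit; exists [:: s]; split; last by rewrite /= cats0.
move=> p; rewrite inE => /eqP->; split=> //; split=> // a b Sa Sb e.
case: (classic (a = [::])) => [|a0]; [by left | right].
by apply: NNPP => b0; apply: nosplit; exists a, b.
Qed.

(* The factorization is unique: peel off the first irreducible factor. *)
Lemma factorization_unique ps ps' :
  (forall p, p \in ps -> irreducible S p) ->
  (forall p, p \in ps' -> irreducible S p) ->
  flatten ps = flatten ps' -> ps = ps'.
Proof.
elim: ps ps' => [|p ps IH] [|p' ps'] //= H H' e.
- by have := irreducible_neq0 (H' p' (mem_head _ _)); move: e; case: (p').
- by have := irreducible_neq0 (H p (mem_head _ _)); move: e; case: (p).
have Htl q : q \in ps -> irreducible S q by move=> hq; apply: H; rewrite inE hq orbT.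
have Htl' q : q \in ps' -> irreducible S q by move=> hq; apply: H'; rewrite inE hq orbT.
have ep : p = p'.
  apply: (irreducible_prefix_unique _ _ _ _ e).
  - exact/H/mem_head.
  - exact/H'/mem_head.
  - exact: flatten_irreducible.
  - exact: flatten_irreducible.
subst p'; congr (_ :: _); apply: IH => //.
by move/eqP: e; rewrite eqseq_cat // => /andP[_ /eqP].
Qed.

Lemma right_unitary_free : free_monoid S.
Proof.
split=> //; split=> // s Ss; have [ps [H e]] := factorization_exists Ss.
exists ps; split=> // ps' [H' e']; apply: factorization_unique => //.
by rewrite e e'.
Qed.

Lemma last_factor s : S s -> s <> [::] ->
  exists t p, [/\ s = t ++ p, S t & irreducible S p].
Proof.
move=> Ss s0; have [ps [H e]] := factorization_exists Ss.
case/lastP: ps H e => [|ps p] H e; first by case: s0; rewrite -e.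
exists (flatten ps), p; split.
- by rewrite -e -cats1 flatten_cat /= cats0.
- by apply: flatten_irreducible => q hq; apply: H; rewrite mem_rcons inE hq orbT.
- by apply: H; rewrite mem_rcons mem_head.
Qed.

End RightUnitarySubmonoid.

Definition lead k : seq nat := 1 :: nseq (k - 1) 2.

Definition inMb k (s : seq nat) : bool :=
  (s == [::]) || [&& fib_comp s, ~~ odd (sumn s) & prefix (lead k) s].

Lemma inMP k s : inM k s <-> inMb k s.
Proof.
rewrite /inM /inMb; split=> [[->//|[f [o p]]]|/orP[/eqP->|/and3P[f o p]]].
- by rewrite f o p orbT.
- by left.
- by right.
Qed.

Lemma inMb_neq0 k s : s != [::] ->
  inMb k s = [&& fib_comp s, ~~ odd (sumn s) & prefix (lead k) s].
Proof. by rewrite /inMb => /negbTE->. Qed.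

Lemma inMb_fib k s : inMb k s -> fib_comp s.
Proof. by case/orP=> [/eqP->|/and3P[]]. Qed.

Lemma inMb_even k s : inMb k s -> ~~ odd (sumn s).
Proof. by case/orP=> [/eqP->|/and3P[]]. Qed.

Lemma inMb_head k s : inMb k s -> s != [::] -> exists r, s = 1 :: r.
Proof.
case: s => [//|x r] /orP[//|/and3P[_ _]].
by rewrite /lead prefix_cons => /andP[/eqP-> _] _; exists r.
Qed.

Lemma fib_comp_cat s t : fib_comp (s ++ t) = fib_comp s && fib_comp t.
Proof. exact: all_cat. Qed.

Lemma prefix_lead_odd k w : prefix w (lead k) -> w != [::] -> odd (sumn w).
Proof.
case: w => [//|x w]; rewrite /lead prefix_cons => /andP[/eqP-> pw] _ /=.
move: pw; rewrite prefixE => /eqP <-.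
rewrite add0n; case: (leqP (size w) (k - 1)) => h.
  by rewrite take_nseq // sumn_nseq oddM.
by rewrite take_oversize ?size_nseq 1?ltnW // sumn_nseq oddM.
Qed.

Lemma inMb_cat k a b : inMb k a -> inMb k b -> inMb k (a ++ b).
Proof.
have [->|a0] := eqVneq a [::]; first by [].
have [->|b0] := eqVneq b [::]; first by rewrite cats0.
have ab0 : a ++ b != [::] by rewrite -size_eq0 size_cat addn_eq0 size_eq0 (negbTE a0).
rewrite !inMb_neq0 // => /and3P[fa oa pa] /and3P[fb ob pb].
by rewrite fib_comp_cat fa fb sumn_cat oddD (negbTE oa) (negbTE ob) prefix_catl.
Qed.

(* M_k is right unitary: a nonempty left cofactor w of an element of M_k
   has even weight, so it cannot be a proper prefix of the head and must
   therefore begin with it. *)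
Lemma inMb_unitary k w p : inMb k (w ++ p) -> inMb k p -> inMb k w.
Proof.
have [->|p0] := eqVneq p [::]; first by rewrite cats0.
have [->|w0] := eqVneq w [::]; first by [].
have wp0 : w ++ p != [::] by rewrite -size_eq0 size_cat addn_eq0 size_eq0 (negbTE w0).
rewrite !inMb_neq0 // fib_comp_cat sumn_cat oddD => /and3P[/andP[fw _] owp pwp].
case/and3P=> _ op _; have ow : ~~ odd (sumn w) by move: owp; rewrite (negbTE op) addbF.
rewrite fw ow /=; case/prefixP: pwp => r e.
case: (leqP (size w) (size (lead k))) => hs.
  have [x [ex _]] := cat_overlap hs e.
  by move: ow; rewrite (@prefix_lead_odd k) // ex prefix_prefix.
by have [x [-> _]] := cat_overlap (ltnW hs) (esym e); rewrite prefix_prefix.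
Qed.

Lemma inM_nil k : inM k [::].
Proof. by left. Qed.

Lemma inM_cat k a b : inM k a -> inM k b -> inM k (a ++ b).
Proof. by move=> /inMP ha /inMP hb; apply/inMP/inMb_cat. Qed.

Lemma inM_unitary k u v : inM k (u ++ v) -> inM k v -> inM k u.
Proof. by move=> /inMP huv /inMP hv; apply/inMP/(inMb_unitary huv). Qed.

Lemma inM_free k : free_monoid (inM k).
Proof. exact: right_unitary_free (@inM_nil k) (@inM_cat k) (@inM_unitary k). Qed.

(* [no_cut k b r]: scanning r from left to right, starting from weight
   parity b (true = odd), the remainder never begins with the head at a
   point where the weight read so far is even. *)
Fixpoint no_cut k (b : bool) (r : seq nat) : bool :=
  if r is x :: r' then (b || ~~ prefix (lead k) r) && no_cut k (b (+) odd x) r'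
  else true.

Lemma no_cutP k b r : reflect
  (forall u v, r = u ++ v -> ~~ (b (+) odd (sumn u)) -> ~~ prefix (lead k) v)
  (no_cut k b r).
Proof.
apply: (iffP idP).
- elim: r b => [|x r IH] b /=; first by move=> _ [|? ?] [|? ?].
  case/andP=> hb hr [|y u] v /= e; first by rewrite -e addbF; case: (b) hb.
  by case: e => <- /IH; rewrite oddD addbA; apply.
- elim: r b => [//|x r IH] b /= H; apply/andP; split.
    by case: b H => // H; exact: (H [::] (x :: r)).
  apply: IH => u v e; rewrite -addbA -oddD; apply: (H (x :: u)); by rewrite e.
Qed.

(* Boolean characterization of the primes of M_k: after the leading 1
   (odd weight so far) there is no cut at even weight followed by the head. *)
Definition primeb k s := [&& s != [::], inMb k s & no_cut k true (behead s)].

Lemma primebP k s : irreducible (inM k) s <-> primeb k s.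
Proof.
rewrite (irreducibleP (@inM_unitary k)) /primeb.
split=> [[/inMP Ms /eqP s0 H]|/and3P[s0 Ms nc]].
  have [r er] := inMb_head Ms s0; rewrite s0 Ms er /=.
  apply/no_cutP => u v e ou; apply/negP => pv.
  have v0 : v != [::] by case: v pv {e}.
  apply: (H (1 :: u) v); rewrite ?er ?e //; first exact/eqP.
  have fv : fib_comp v.
    by move: (inMb_fib Ms); rewrite er e -cat_cons fib_comp_cat => /andP[].
  have ev : ~~ odd (sumn v).
    move: (inMb_even Ms) ou; rewrite er e /= sumn_cat !oddD.
    by case: (odd (sumn u)); case: (odd (sumn v)).
  by apply/inMP; rewrite inMb_neq0 // fv ev pv.
split; [exact/inMP | exact/eqP |].
have [r er] := inMb_head Ms s0; move: nc; rewrite er /= => /no_cutP nc.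
move=> [//|y u] v [<- e] _ /eqP v0 /inMP; rewrite inMb_neq0 // => /and3P[_ ov pv].
have ou : odd (sumn u).
  move: (inMb_even Ms) ov; rewrite er e /= sumn_cat !oddD.
  by case: (odd (sumn u)); case: (odd (sumn v)).
by move: (nc u v e); rewrite ou pv => /(_ isT).
Qed.

Lemma fib_comp_nseq2 l : fib_comp (nseq l 2).
Proof. by elim: l. Qed.

Lemma odd_nseq2 l : odd (sumn (nseq l 2)) = false.
Proof. by rewrite sumn_nseq oddM. Qed.

(* Inside a run of 2's the remainder never begins with the head (a 1). *)
Lemma no_cut_nseq2 k b l r : no_cut k b (nseq l 2 ++ r) = no_cut k b r.
Proof. by elim: l => //= l IH; rewrite addbF IH orbT. Qed.

Lemma prefix_nseq2 n j r : head 0 r != 2 ->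
  prefix (nseq n 2) (nseq j 2 ++ r) = (n <= j).
Proof.
move=> hr; elim: n j => [|n IH] [|j] //=; first by rewrite prefix0s.
by case: r hr {IH} => [|x r] //=; rewrite eq_sym => /negbTE->.
Qed.

Lemma prefix_lead_nseq2 k j r : head 0 r != 2 ->
  prefix (lead k) (1 :: nseq j 2 ++ r) = (k - 1 <= j).
Proof. by move=> hr; rewrite /lead prefix_cons eqxx prefix_nseq2. Qed.

Lemma fib_comp_run x : fib_comp x -> exists l r, x = nseq l 2 ++ r /\
  (r = [::] \/ exists r', r = 1 :: r' /\ fib_comp r').
Proof.
elim: x => [|y x IH]; first by exists 0, [::]; split; [|left].
case/andP=> /orP[/eqP->|/eqP->] fx; first by exists 0, (1 :: x); split; [|right; exists x].
by have [l [r [-> hr]]] := IH fx; exists l.+1, r.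
Qed.

Inductive Qtail k : seq nat -> Prop :=
| Qtail_end j : Qtail k (1 :: nseq j 2)
| Qtail_prime p r : primeQ k p -> Qtail k r -> Qtail k (p ++ r).

Lemma QtailP k r : Qtail k r <-> exists q j, inQ k q /\ r = q ++ 1 :: nseq j 2.
Proof.
split=> [|[_ [j [[ps [hps <-]] ->]]]].
  elim=> [j|p {}r hp _ [q [j [[ps [hps eq]] er]]]]; first by exists [::], j; split=> //; exists [::].
  exists (p ++ q), j; split; last by rewrite er catA.
  exists (p :: ps); split=> [p'|]; last by rewrite /= eq.
  by rewrite inE => /orP[/eqP->|/hps].
elim: ps hps => [|p ps IH] hps /=; first exact: Qtail_end.
rewrite -catA; apply: Qtail_prime; first exact/hps/mem_head.
by apply: IH => p' hp'; apply: hps; rewrite inE hp' orbT.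
Qed.

Lemma Qtail_props k r : Qtail k r ->
  [/\ fib_comp r, odd (sumn r), no_cut k true r & head 0 r == 1].
Proof.
elim=> [j|_ {}r [l [j [hj ->]]] _ [fr or nr hr]].
  by rewrite /= fib_comp_nseq2 odd_nseq2 -[nseq j 2]cats0 no_cut_nseq2.
have r2 : head 0 r != 2 by move/eqP: hr => ->.
rewrite /= -!catA fib_comp_cat !fib_comp_nseq2 /= fib_comp_cat fib_comp_nseq2 fr.
rewrite !sumn_cat /= sumn_cat !oddD !odd_nseq2 or no_cut_nseq2 /= no_cut_nseq2 nr.
by rewrite prefix_nseq2 // -ltnNge andbT; split=> //; lia.
Qed.

Lemma Qtail_of_props k r : fib_comp r -> odd (sumn r) -> no_cut k true r ->
  head 0 r == 1 -> Qtail k r.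
Proof.
have [n] := ubnP (size r); elim: n r => // n IH [//|x r0] hs /andP[_ f0] o nc /eqP /= ex.
subst x; have [l [rest [er0 hrest]]] := fib_comp_run f0; subst r0.
case: hrest => [->|[r1 [er1 f1]]]; first by rewrite cats0; apply: Qtail_end.
have [j [r2 [er1' hr2]]] := fib_comp_run f1; subst rest r1.
move: o nc; rewrite /= sumn_cat /= sumn_cat !oddD !odd_nseq2 /=.
rewrite no_cut_nseq2 /= no_cut_nseq2 negbK => o /andP[nlead nc].
case: hr2 => [er2|[r3 [er2 f3]]]; first by rewrite er2 in o.
subst r2; have pQ : primeQ k (1 :: nseq l 2 ++ 1 :: nseq j 2).
  exists l, j; split=> //; move: nlead; rewrite prefix_nseq2 // -ltnNge; lia.
rewrite (_ : 1 :: _ = (1 :: nseq l 2 ++ 1 :: nseq j 2) ++ 1 :: r3); last first.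
  by rewrite /= -!catA.
apply: (Qtail_prime pQ); apply: IH => //.
by move: hs; rewrite /= !size_cat /= size_cat !size_nseq /=; lia.
Qed.

Lemma primeM_primeb k p : primeM k p <-> primeb k p.
Proof.
split.
- case=> i [j [q [hq ->]]]; set r := q ++ _.
  have /Qtail_props[fr or nr /eqP hr] : Qtail k r by apply/QtailP; exists q, j.
  have r2 : head 0 r != 2 by rewrite hr.
  rewrite catA -nseqD /primeb inMb_neq0 //= fib_comp_cat fib_comp_nseq2 fr add0n.
  by rewrite sumn_cat oddD odd_nseq2 or prefix_nseq2 // leq_addr no_cut_nseq2 nr.
- case/and3P=> p0 Mp nc; have [s es] := inMb_head Mp p0; subst p.
  move: Mp nc; rewrite inMb_neq0 // => /and3P[/andP[_ fs] os ps] /= nc.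
  have [m [r [es hr]]] := fib_comp_run fs; subst s.
  have r2 : head 0 r != 2 by case: hr => [->|[r' [-> _]]].
  move: ps nc; rewrite prefix_lead_nseq2 // no_cut_nseq2 => hm nr.
  have or : odd (sumn r).
    by move: os; rewrite -cat_cons sumn_cat oddD /= add0n odd_nseq2; case: odd.
  case: hr => [er|[r' [er fr']]]; first by rewrite er in or.
  have /QtailP[q [j [hq eq]]] : Qtail k r.
    by apply: Qtail_of_props => //; rewrite er //= fr'.
  by exists (m - (k - 1)), j, q; rewrite catA -nseqD subnKC // -eq.
Qed.

Fixpoint fibs (n : nat) : seq (seq nat) :=
  match n with
  | 0 => [:: [::]]
  | m.+1 => match m with
            | 0 => [:: [:: 1]]
            | p.+1 => map (cons 1) (fibs m) ++ map (cons 2) (fibs p)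
            end
  end.

Lemma fibsS n : fibs n.+2 = map (cons 1) (fibs n.+1) ++ map (cons 2) (fibs n).
Proof. by []. Qed.

Lemma mem_map_cons (x y : nat) s L : (x :: s \in map (cons y) L) = (x == y) && (s \in L).
Proof. by apply/mapP/andP => [[t ht [-> ->]]|[/eqP -> hs]]; [|exists s]. Qed.

Lemma mem_fibs n s : (s \in fibs n) = fib_comp s && (sumn s == n).
Proof.
elim: s n => [|x s IH] n.
  case: n => [|[|n]] //; rewrite fibsS mem_cat.
  by apply/norP; split; apply/mapP => -[].
case: n => [|[|n]].
- by rewrite mem_seq1; case: x => [|x] //=; rewrite andbF.
- rewrite /= mem_seq1 eqseq_cons; case: x => [|[|[|x]]] //=; rewrite ?andbF //.
  by case: s {IH} => [//|[|y] s] //=; rewrite add1n eqSS addSn andbF.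
- rewrite fibsS mem_cat !mem_map_cons !IH.
  by case: x => [|[|[|x]]] //=; rewrite ?andbF // orbF add1n eqSS.
Qed.

Lemma uniq_fibs n : uniq (fibs n).
Proof.
suff : uniq (fibs n) /\ uniq (fibs n.+1) by case.
have inj_cons (y : nat) : injective (cons y) by move=> a b [].
elim: n => [//|n [u1 u2]]; split=> //.
rewrite fibsS cat_uniq !(map_inj_uniq (inj_cons _)) u1 u2 /= andbT.
by apply/hasPn => s /mapP [t _ ->]; apply/mapP => -[t' _ []].
Qed.

Lemma size_fibs n : size (fibs n) = fib n.+1.
Proof.
suff : size (fibs n) = fib n.+1 /\ size (fibs n.+1) = fib n.+2 by case.
elim: n => [//|n [u1 u2]]; split=> //.
by rewrite fibsS size_cat !size_map u1 u2.
Qed.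

Lemma count_prefix1 u n :
  count (prefix (1 :: u)) (fibs n.+1) = count (prefix u) (fibs n).
Proof.
case: n => [//|n]; rewrite fibsS count_cat !count_map.
by rewrite (@eq_count _ (preim (cons 2) _) pred0) ?count_pred0 ?addn0.
Qed.

Lemma count_prefix2 u n : count (prefix (2 :: u)) (fibs n.+2) = count (prefix u) (fibs n).
Proof.
rewrite fibsS count_cat !count_map.
by rewrite (@eq_count _ (preim (cons 1) _) pred0) ?count_pred0.
Qed.

Lemma count_prefix_nseq2 j m : count (prefix (nseq j 2)) (fibs m) =
  if j.*2 <= m then fib (m - j.*2).+1 else 0.
Proof.
elim: j m => [|j IH] m.
  rewrite subn0 (@eq_count _ _ predT) ?count_predT ?size_fibs // => s.
  exact: prefix0s.
case: m => [|[|m]]; [by [] | by [] |].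
by rewrite (_ : nseq j.+1 2 = 2 :: nseq j 2) // count_prefix2 IH doubleS !ltnS !subSS.
Qed.

Definition countM k n := count (inMb k) (fibs n.*2).
Definition countP k n := count (primeb k) (fibs n.*2).

(* A nonempty element of M_k of weight n is (1, 2^(k-1)) followed by an
   arbitrary Fibonacci composition of 2(n - k) + 1. *)
Lemma countM_val k n : 1 <= k -> countM k n =
  if n == 0 then 1 else if k <= n then fib (2 * (n - k) + 2) else 0.
Proof.
move=> hk; rewrite /countM; case: n => [//|n].
rewrite (@eq_in_count _ _ (prefix (lead k))); last first.
  move=> s; rewrite mem_fibs => /andP[f /eqP e]; rewrite /inMb f e /= odd_double /=.
  by case: s e {f}.
rewrite doubleS /lead count_prefix1 count_prefix_nseq2.
have -> : ((k - 1).*2 <= n.*2.+1) = (k <= n.+1) by rewrite -!muln2; apply/idP/idP; lia.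
by case: ifP => // h; congr fib; rewrite -!muln2; lia.
Qed.

Local Open Scope ring_scope.

Lemma gfB_countM k n : (1 <= k)%N -> gfB k n = (countM k n)%:Z.
Proof.
move=> hk; rewrite countM_val // /gfB; case: n => [|n] /=.
  by rewrite leqn0; case: (k =P 0) hk => [->//|].
by rewrite add0r; case: ifP.
Qed.

Local Close Scope ring_scope.

Lemma countP_card k n :
  card_is (fun c => irreducible (inM k) c /\ sumn c = n.*2) (countP k n).
Proof.
exists (filter (primeb k) (fibs n.*2)); rewrite size_filter.
split; [exact/filter_uniq/uniq_fibs | split=> // c].
rewrite mem_filter mem_fibs primebP; split=> [/and3P[h _ /eqP]//|[h ->]].
by case/and3P: (h) => _ /inMb_fib -> _; rewrite h eqxx.
Qed.

Definition last_split k i (s : seq nat) : bool :=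
  has (fun j => [&& inMb k (take j s), primeb k (drop j s) & sumn (take j s) == i.*2])
      (iota 0 (size s).+1).

Lemma last_splitP k i s : reflect
  (exists t p, [/\ s = t ++ p, inMb k t, primeb k p & sumn t = i.*2])
  (last_split k i s).
Proof.
apply: (iffP hasP) => [[j _ /and3P[h1 h2 /eqP h3]]|[t [p [e h1 h2 h3]]]].
  by exists (take j s), (drop j s); rewrite cat_take_drop.
exists (size t); first by rewrite mem_iota e size_cat; lia.
by rewrite e take_size_cat // drop_size_cat // h1 h2 h3 eqxx.
Qed.

(* By unique factorization the weight of the cofactor is determined ... *)
Lemma last_split_unique k i i' s : last_split k i s -> last_split k i' s -> i = i'.
Proof.
move=> /last_splitP[t [p [e _ h2 h3]]] /last_splitP[t' [p' [e' _ h2' h3']]].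
have [_ et] := irreducible_suffix_unique (@inM_unitary k) ((primebP _ _).2 h2)
  ((primebP _ _).2 h2') (etrans (esym e) e').
by apply: double_inj; rewrite -h3 -h3' et.
Qed.

Lemma last_split_exists k s : inMb k s -> s != [::] ->
  exists2 i, last_split k i s & i <= (sumn s)./2.
Proof.
move=> /inMP Ms /eqP s0.
have [t [p [e Mt Pp]]] := last_factor (@inM_nil k) (@inM_cat k) Ms s0.
move/inMP: Mt => Mt; have ev := inMb_even Mt.
exists (sumn t)./2.
  apply/last_splitP; exists t, p; split=> //; first exact/primebP.
  by rewrite -[in LHS](odd_double_half (sumn t)) (negbTE ev).
by rewrite e sumn_cat half_leq // leq_addr.
Qed.

Lemma count_partition (T : eqType) (a : pred T) (b : nat -> pred T) N (F : seq T) :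
  (forall s, s \in F -> a s -> \sum_(i < N) b i s = 1) ->
  count a F = \sum_(i < N) count (fun s => a s && b i s) F.
Proof.
elim: F => [|x F IH] H /=; first by rewrite big1.
rewrite big_split /= IH; last by move=> s hs; apply: H; rewrite inE hs orbT.
congr (_ + _); case ha: (a x) => /=; last by rewrite big1.
by rewrite -(H x (mem_head _ _) ha); apply: eq_bigr => i _; case: (b i x).
Qed.

Lemma last_split_partition k n s : 1 <= n -> s \in fibs n.*2 -> inMb k s ->
  \sum_(i < n.+1) last_split k i s = 1.
Proof.
move=> hn; rewrite mem_fibs => /andP[_ /eqP es] Ms.
have s0 : s != [::] by case: s es {Ms} => //=; case: n hn.
have [i0 h0 hi0] := last_split_exists Ms s0; rewrite es doubleK in hi0.
rewrite (bigD1 (Ordinal (hi0 : i0 < n.+1))) //= h0 big1 // => j hj.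
case hj0: (last_split k j s) => //; case/eqP: hj; apply/val_inj => /=.
exact: last_split_unique hj0 h0.
Qed.

(* Concatenation is a bijection from (M_k of weight i) x (primes of weight
   n - i) onto the elements of weight n whose cofactor has weight i. *)
Lemma count_last_split k n i : i <= n ->
  count (fun s => inMb k s && last_split k i s) (fibs n.*2) = countM k i * countP k (n - i).
Proof.
move=> hi; rewrite -size_filter /countM /countP -!size_filter -(size_allpairs cat).
apply/perm_size/uniq_perm.
- exact/filter_uniq/uniq_fibs.
- apply: allpairs_uniq; try exact/filter_uniq/uniq_fibs.
  move=> [t p] [t' p'] /allpairsP[[t1 p1] [_ hp1 [-> ->]]]
    /allpairsP[[t2 p2] [_ hp2 [-> ->]]] /= e.
  move: hp1 hp2; rewrite !mem_filter => /andP[i1 _] /andP[i2 _].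
  have [ep et] := irreducible_suffix_unique (@inM_unitary k) ((primebP _ _).2 i1)
    ((primebP _ _).2 i2) e.
  by move: ep et => /= -> ->.
- move=> s; rewrite mem_filter; apply/andP/allpairsP.
  + case=> /andP[Ms /last_splitP[t [p [e Mt Pp st]]]]; rewrite mem_fibs.
    case/andP=> f /eqP ss; exists (t, p) => /=; split=> //.
    * rewrite mem_filter Mt mem_fibs st eqxx andbT.
      by move: f; rewrite e fib_comp_cat => /andP[].
    * rewrite mem_filter Pp mem_fibs.
      move: f ss; rewrite e fib_comp_cat sumn_cat st => /andP[_ ->] ss /=.
      by apply/eqP; rewrite -!muln2 in ss *; lia.
  + case=> -[t p] /= [ht hp ->].
    move: ht hp; rewrite !mem_filter !mem_fibs.
    case/and3P=> Mt ft /eqP st /and3P[Pp fp /eqP sp].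
    split.
      apply/andP; split; first by apply: inMb_cat => //; case/and3P: Pp.
      by apply/last_splitP; exists t, p.
    rewrite fib_comp_cat ft fp sumn_cat st sp /=.
    by apply/eqP; rewrite -!muln2; lia.
Qed.

(* Hence |M_n| = sum_i |M_i| |P_(n-i)| for n >= 1, i.e. G (1 - A) = 1. *)
Lemma countM_rec k n : 1 <= n ->
  countM k n = \sum_(i < n.+1) countM k i * countP k (n - i).
Proof.
move=> hn; rewrite {1}/countM (@count_partition _ _ (last_split k) n.+1).
  by apply: eq_bigr => i _; rewrite count_last_split // -ltnS.
by move=> s hs Ms; apply: last_split_partition.
Qed.

Local Open Scope ring_scope.

Lemma sum_shift_delta (f : nat -> int) n c :
  \sum_(i < n.+1) f i * ((n - i)%N == c)%:R = if (c <= n)%N then f (n - c)%N else 0.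
Proof.
under eq_bigr => i _ do rewrite mulr_natr mulrb.
rewrite -big_mkcond /=; case: leqP => hc.
  rewrite (eq_bigl (fun i : 'I_n.+1 => (i : nat) == (n - c)%N)).
    by rewrite big_ord1_eq ltnS leq_subr.
  move=> i /=; have := ltn_ord i; rewrite ltnS => hi; apply/eqP/eqP; lia.
by rewrite big_pred0 // => i /=; apply/eqP; have := ltn_ord i; lia.
Qed.

Lemma conv_M_primes k n : (1 <= k)%N ->
  conv (gfB k) (fun i => (i == 0)%:R - (countP k i)%:Z) n = (n == 0)%:R.
Proof.
move=> hk; rewrite /conv.
under eq_bigr => i _ do rewrite mulrBr.
rewrite sumrB sum_shift_delta leq0n subn0 gfB_countM //.
case: n => [|n]; first by rewrite big_ord_recr big_ord0 /= mulr0 add0r subr0.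
rewrite countM_rec // -natz natr_sum.
rewrite (_ : \sum_(i < n.+2) gfB k i * (countP k (n.+1 - i))%:Z =
             \sum_(i < n.+2) ((countM k i * countP k (n.+1 - i))%N)%:R) ?subrr //.
by apply: eq_bigr => i _; rewrite gfB_countM // natrM !natz.
Qed.

Lemma conv_denom0 (h : nat -> int) n : conv h denom0 n =
  h n - 3 * (if (1 <= n)%N then h n.-1 else 0) + (if (2 <= n)%N then h n.-2 else 0).
Proof.
rewrite /conv /denom0.
under eq_bigr => i _ do rewrite mulrDr mulrBr mulrCA.
by rewrite big_split sumrB /= -mulr_sumr !sum_shift_delta leq0n subn0 subn1 subn2.
Qed.

Lemma fib_step m : (fib m.+4 + fib m = 3 * fib m.+2)%N.
Proof.
have e4 : fib m.+4 = (fib m.+3 + fib m.+2)%N by [].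
have e3 : fib m.+3 = (fib m.+2 + fib m.+1)%N by [].
have e2 : fib m.+2 = (fib m.+1 + fib m)%N by [].
lia.
Qed.

(* (sum_(n >= 0) F_(2n+2) x^(n+k)) (1 - 3x + x^2) = x^k, since
   F_(2m+6) - 3 F_(2m+4) + F_(2m+2) = 0. *)
Lemma conv_fib_denom0 k n : (1 <= k)%N ->
  conv (fun i => gfB k i - (i == 0)%:R) denom0 n = (n == k)%:R.
Proof.
move=> hk; pose h i : int := if (k <= i)%N then (fib (2 * (i - k) + 2))%:Z else 0.
have h_low i : (i < k)%N -> h i = 0 by move=> hi; rewrite /h leqNgt hi.
have h_high d : h (k + d)%N = (fib (2 * d + 2))%:Z by rewrite /h leq_addr addKn.
rewrite (_ : conv _ _ _ = conv h denom0 n); last first.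
  by apply: eq_bigr => i _; rewrite /gfB addrAC subrr add0r.
rewrite conv_denom0; case: (ltnP n k) => hnk.
  have hn1 : (n.-1 < k)%N := leq_ltn_trans (leq_pred n) hnk.
  have hn2 : (n.-2 < k)%N := leq_ltn_trans (leq_pred n.-1) hn1.
  by rewrite (h_low n) // (h_low n.-1) // (h_low n.-2) // !if_same ltn_eqF // subrr addr0.
have [d ->] : exists d, n = (k + d)%N by exists (n - k)%N; rewrite subnKC.
have h_k : h k = 1 by rewrite -[k in h k]addn0 h_high.
have h_pred : h k.-1 = 0 by rewrite h_low // ltn_predL.
case: d => [|[|m]].
- by rewrite addn0 eqxx h_k h_pred (h_low k.-2) ?if_same ?mulr0 ?subr0 ?addr0 //; lia.
- rewrite addn1 /= h_pred if_same gtn_eqF // h_k (_ : h k.+1 = 3).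
    by rewrite mulr1.
  by rewrite -addn1 h_high.
- rewrite !addnS /= -!addnS !h_high gtn_eqF; last lia.
  have := fib_step (2 * m + 2).
  rewrite (_ : (2 * m + 2).+4 = 2 * m.+2 + 2)%N; last lia.
  rewrite (_ : (2 * m + 2).+2 = 2 * m.+1 + 2)%N; last lia.
  lia.
Qed.

Definition trunc (f : nat -> int) N : {poly int} := \poly_(i < N) f i.

Lemma conv_trunc f g N n : (n < N)%N -> conv f g n = (trunc f N * trunc g N)`_n.
Proof.
move=> hn; rewrite coefM /conv; apply: eq_bigr => i _.
have := ltn_ord i; rewrite ltnS => hi.
by rewrite !coef_poly ifT ?ifT //; lia.
Qed.

Lemma truncD f g N : trunc (fun i => f i + g i) N = trunc f N + trunc g N.
Proof. by apply/polyP => i; rewrite coefD !coef_poly; case: ifP; rewrite ?addr0. Qed.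

Lemma truncB f g N : trunc (fun i => f i - g i) N = trunc f N - trunc g N.
Proof. by apply/polyP => i; rewrite coefB !coef_poly; case: ifP; rewrite ?subr0. Qed.

Lemma trunc_delta c N : (c < N)%N -> trunc (fun i => (i == c)%:R) N = 'X^c.
Proof.
move=> hc; apply/polyP => i; rewrite coef_poly coefXn.
by case: ifP => // hi; case: eqP => // ei; move: hi; rewrite ei hc.
Qed.

Definition vanishes_below N (p : {poly int}) := forall i, (i < N)%N -> p`_i = 0.

Lemma vanishes_belowB N p q :
  vanishes_below N p -> vanishes_below N q -> vanishes_below N (p - q).
Proof. by move=> hp hq i hi; rewrite coefB hp ?hq ?subr0. Qed.

Lemma vanishes_belowMr N p q : vanishes_below N p -> vanishes_below N (p * q).
Proof.
move=> hp i hi; rewrite coefM big1 // => j _.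
by rewrite hp ?mul0r //; apply: leq_ltn_trans hi; rewrite -ltnS.
Qed.

(* From G (1 - A) = 1 and (G - 1) D = x^c it follows that A (D + x^c) = x^c,
   by the identity A (D + x^c) - x^c = ((G-1) D - x^c)(1 - A) - (G (1-A) - 1) D. *)
Lemma series_identity (G A D : nat -> int) c :
  (forall n, conv G (fun i => (i == 0)%:R - A i) n = (n == 0)%:R) ->
  (forall n, conv (fun i => G i - (i == 0)%:R) D n = (n == c)%:R) ->
  forall n, conv A (fun i => D i + (i == c)%:R) n = (n == c)%:R.
Proof.
move=> hGA hGD n; set N := (n + c).+1.
have hn : (n < N)%N by rewrite ltnS leq_addr.
have hc : (c < N)%N by rewrite ltnS leq_addl.
set Gp := trunc G N; set Ap := trunc A N; set Dp := trunc D N.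
have E1 : vanishes_below N (Gp * (1 - Ap) - 1).
  have -> : 1 - Ap = trunc (fun i => (i == 0)%:R - A i) N.
    by rewrite truncB trunc_delta.
  by move=> i hi; rewrite coefB -conv_trunc // hGA coef1 subrr.
have E2 : vanishes_below N ((Gp - 1) * Dp - 'X^c).
  have -> : Gp - 1 = trunc (fun i => G i - (i == 0)%:R) N.
    by rewrite truncB trunc_delta.
  by move=> i hi; rewrite coefB -conv_trunc // hGD coefXn subrr.
have E : vanishes_below N (Ap * (Dp + 'X^c) - 'X^c).
  rewrite (_ : _ - _ = ((Gp - 1) * Dp - 'X^c) * (1 - Ap) - (Gp * (1 - Ap) - 1) * Dp).
    exact: vanishes_belowB (vanishes_belowMr _ E2) (vanishes_belowMr _ E1).
  by ring.
rewrite (conv_trunc _ _ hn) truncD trunc_delta //.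
by have /eqP := E n hn; rewrite coefB coefXn subr_eq0 => /eqP.
Qed.

Theorem proposition11 (k : nat) (hk : (1 <= k)%N) :
  free_monoid (inM k) /\
  (forall p, irreducible (inM k) p <-> primeM k p) /\
  exists a : nat -> nat,
    (* a n = number of primes of M of weight n (compositions of 2n) *)
    (forall n, card_is (fun c => irreducible (inM k) c /\ sumn c = n.*2) (a n)) /\
    (* sum_n a n x^n = x^k / (1 - 3x + x^2 + x^k) *)
    (forall n, conv (fun i => (a i)%:Z) (denomk k) n = (n == k)%N%:R) /\
    (* 1 + sum F_(2n+2) x^(n+k) = 1 + x^k / (1 - 3x + x^2) *)
    (forall n, conv (fun i => gfB k i - (i == 0)%N%:R) denom0 n = (n == k)%N%:R) /\
    (* 1 + sum F_(2n+2) x^(n+k) = (1 - x^k/(1 - 3x + x^2 + x^k))^(-1) *)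
    (forall n, conv (gfB k) (fun i => (i == 0)%N%:R - (a i)%:Z) n = (n == 0)%N%:R).
Proof.
split; first exact: inM_free.
split; first by move=> p; rewrite primebP primeM_primeb.
exists (countP k); split; first by move=> n; apply: countP_card.
have hGA n := conv_M_primes n hk.
have hGD n := conv_fib_denom0 n hk.
by split; first exact: series_identity hGA hGD.
Qed.
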